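(* Let $n\ge 1$ and let $\beta=\beta^{(2n)}=(\beta_{ij})_{i,j\ge 0,\ i+j\le 2n}$ be a real truncated moment sequence with moment matrix $\mathcal M(n)(\beta)$. Let $r=\operatorname{rank}\mathcal M(n)(\beta)$ and $v=\operatorname{card}\mathcal V(\mathcal M(n)(\beta))$, and assume $v<\infty$ and $v=r$. Then $\beta$ admits a representing measure if and only if $\mathcal M(n)(\beta)$ has a positive semidefinite moment matrix extension $\mathcal M(n+1)$ satisfying $\operatorname{rank}\mathcal M(n+1)\le \operatorname{card}\mathcal V(\mathcal M(n+1))$.
   Context: For a real sequence $\gamma=(\gamma_{ij})_{i,j\ge0,\ i+j\le 2m}$, the moment matrix $\mathcal M(m)(\gamma)$ has rows and columns indexed by the monomials $1,X,Y,X^2,XY,Y^2,\dots,X^m,\dots,Y^m$ (degree-lexicographic order), the entry in row $X^iY^j$ and column $X^kY^l$ being $\gamma_{i+k,j+l}$. For a polynomial $p(x,y)=\sum a_{ij}x^iy^j$ of degree at most $m$, $p(X,Y)$ denotes the corresponding linear combination $\sum a_{ij}X^iY^j$ of columns of $\mathcal M(m)$. The algebraic variety of $\mathcal M(m)$ is $\mathcal V(\mathcal M(m))=\bigcap\{\mathcal Z(p): \deg p\le m,\ p(X,Y)=\mathbf 0\}$, where $\mathcal Z(p)=\{(x,y)\in\mathbb R^2: p(x,y)=0\}$. A representing measure for $\beta$ is a positive Borel measure $\mu$ on $\mathbb R^2$ with $\beta_{ij}=\int x^iy^j\,d\mu$ for all $i+j\le 2n$. A moment matrix extension $\mathcal M(n+1)$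 of $\mathcal M(n)(\beta)$ is a matrix $\mathcal M(n+1)(\tilde\beta)$ for some real sequence $\tilde\beta$ of degree $2n+2$ with $\tilde\beta_{ij}=\beta_{ij}$ for $i+j\le 2n$. *)

From HB Require Import structures.
From mathcomp Require Import all_boot all_order all_algebra.
From mathcomp Require Import all_classical all_reals all_analysis.
Set Implicit Arguments. Unset Strict Implicit. Unset Printing Implicit Defensive.
Import Order.TTheory GRing.Theory Num.Theory.
Local Open Scope classical_set_scope.
Local Open Scope ring_scope.

(* Monomials X^i Y^j of degree <= m, in degree-lexicographic order:
   1, X, Y, X^2, XY, Y^2, ..., X^m, ..., Y^m; a pair (i,j) stands for X^i Y^j. *)
Definition monos (m : nat) : seq (nat * nat) :=
  flatten [seq [seq (d - k, k)%N | k <- iota 0 d.+1] | d <- iota 0 m.+1].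

Definition mdim (m : nat) : nat := size (monos m).

Definition mon (m : nat) (a : 'I_(mdim m)) : nat * nat := nth (0%N, 0%N) (monos m) a.

Section Moment.
Variable R : realType.

Definition moment_matrix (m : nat) (g : nat -> nat -> R) : 'M[R]_(mdim m) :=
  \matrix_(a, b) g ((mon a).1 + (mon b).1)%N ((mon a).2 + (mon b).2)%N.

(* The polynomial with coefficient vector c (coefficient of X^i Y^j at the
   index of (i,j)), evaluated at (x,y).  Such polynomials are exactly those
   of degree <= m; p(X,Y) is then  M *m c. *)
Definition peval (m : nat) (c : 'cV[R]_(mdim m)) (x y : R) : R :=
  \sum_a c a 0 * x ^+ (mon a).1 * y ^+ (mon a).2.

Definition variety (m : nat) (M : 'M[R]_(mdim m)) : set (R * R) :=
  [set p | forall c : 'cV[R]_(mdim m), M *m c = 0 -> peval c p.1 p.2 = 0].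

Definition psd (k : nat) (M : 'M[R]_k) : Prop :=
  M^T = M /\ forall x : 'cV[R]_k, 0 <= (x^T *m M *m x) 0 0.

End Moment.

Definition vcard_eq (T : eqType) (A : set T) (k : nat) : Prop :=
  exists s : seq T, [/\ uniq s, [set` s] = A & size s = k].

(* k <= card A (cardinality possibly infinite) *)
Definition vcard_ge (T : eqType) (A : set T) (k : nat) : Prop :=
  exists s : seq T, [/\ uniq s, [set` s] `<=` A & size s = k].

Definition rep_measure (R : realType) (n : nat) (beta : nat -> nat -> R)
  (mu : {measure set (R * R) -> \bar R}) : Prop :=
  forall i j : nat, (i + j <= 2 * n)%N ->
    mu.-integrable setT (fun p : R * R => (p.1 ^+ i * p.2 ^+ j)%:E) /\
    (\int[mu]_p (p.1 ^+ i * p.2 ^+ j)%:E = (beta i j)%:E)%E.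

From HB Require Import structures.
From mathcomp Require Import all_boot all_order all_algebra.
From mathcomp Require Import all_classical all_reals all_analysis.
From mathcomp Require Import measurable_realfun.
From mathcomp Require Import zify ring lra.
Set Implicit Arguments. Unset Strict Implicit. Unset Printing Implicit Defensive.
Import Order.TTheory GRing.Theory Num.Theory.
Local Open Scope classical_set_scope.
Local Open Scope ring_scope.

(* Forward: a representing measure integrates the sum of squares of the kernel
   polynomials of M(n) to tr (C C^T M(n)) = 0, where C = cokermx M(n), so it is
   carried by the finite variety V(M(n)) and is a finite sum of point masses; the
   moments of degree 2n+2 of that measure give a positive extension of rank at
   most the number of atoms, all of which lie in V(M(n+1)).
   Backward: V(M(n+1)) is contained in V(M(n)), hence rank M(n+1) <= rank M(n) and
   the rows of degree <= n span the row space of M(n+1).  For r = rank M(n+1)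
   points w_k of V(M(n+1)) this yields polynomials p_k of degree <= n with
   z(w_k) = M(n+1) p_k, z being the monomial vector.  The Hankel structure of
   M(n+1) makes x^e(w_k) p_l(w_k) symmetric in k and l for e in {1, x, y}, so
   p_l(w_k) = 0 for k <> l, while p_k(w_k) > 0 by positivity.  Hence
   M(n+1) = sum_k p_k(w_k)^-1 z(w_k) z(w_k)^T is the moment matrix of the measure
   sum_k p_k(w_k)^-1 delta_(w_k). *)

Lemma mem_monos m i j : ((i, j) \in monos m) = (i + j <= m)%N.
Proof.
apply/flattenP/idP => [[_ /mapP[d hd ->] /mapP[k hk [-> ->]]] | h].
  by move: hd hk; rewrite !mem_iota; lia.
exists [seq ((i + j) - k, k)%N | k <- iota 0 (i + j).+1].
  by apply/mapP; exists (i + j)%N => //; rewrite mem_iota; lia.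
by apply/mapP; exists j; [rewrite mem_iota; lia | rewrite addnK].
Qed.

Lemma mdim_leS m : (mdim m <= mdim m.+1)%N.
Proof.
rewrite /mdim /monos -[m.+2]addn1 iotaD map_cat flatten_cat size_cat.
exact: leq_addr.
Qed.

Definition widen_deg {m} : 'I_(mdim m) -> 'I_(mdim m.+1) := widen_ord (mdim_leS m).

Lemma mon_widen_deg m (a : 'I_(mdim m)) : mon (widen_deg a) = mon a.
Proof.
rewrite /mon /= /monos -[m.+2]addn1 iotaD map_cat flatten_cat nth_cat.
by rewrite ltn_ord.
Qed.

Lemma mon_deg_le m (a : 'I_(mdim m)) : ((mon a).1 + (mon a).2 <= m)%N.
Proof.
have : mon a \in monos m by apply: mem_nth; exact: ltn_ord.
by case: (mon a) => i j; rewrite mem_monos.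
Qed.

Lemma mon_onto m i j : (i + j <= m)%N -> exists a : 'I_(mdim m), mon a = (i, j).
Proof.
rewrite -mem_monos => h.
have hi : (index (i, j) (monos m) < mdim m)%N by rewrite /mdim index_mem.
by exists (Ordinal hi); rewrite /mon /= nth_index.
Qed.

Lemma mon_split m i j : (i + j <= 2 * m)%N -> exists a b : 'I_(mdim m),
  i = ((mon a).1 + (mon b).1)%N /\ j = ((mon a).2 + (mon b).2)%N.
Proof.
move=> h; pose i1 := minn i m; pose j1 := minn j (m - i1).
have [a ha] := @mon_onto m i1 j1 ltac:(lia).
have [b hb] := @mon_onto m (i - i1) (j - j1) ltac:(lia).
by exists a, b; rewrite ha hb /=; split; lia.
Qed.

Section Moments.
Variable R : realType.

Definition monom (p : R * R) (e : nat * nat) : R := p.1 ^+ e.1 * p.2 ^+ e.2.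

Lemma monomD p e f : monom p (e.1 + f.1, e.2 + f.2)%N = monom p e * monom p f.
Proof. by rewrite /monom /= !exprD; ring. Qed.

Definition monvec m p : 'cV[R]_(mdim m) := \col_a monom p (mon a).

Lemma peval_monvec m (c : 'cV[R]_(mdim m)) x y :
  peval c x y = ((monvec m (x, y))^T *m c) 0 0.
Proof. by rewrite mxE; apply: eq_bigr => a _; rewrite !mxE /monom /=; ring. Qed.

Lemma varietyP m (M : 'M[R]_(mdim m)) p :
  variety M p <-> ((monvec m p)^T <= M)%MS.
Proof.
split => [hv | /submxP[D hD] c hc]; last first.
  by rewrite peval_monvec -surjective_pairing hD -mulmxA hc mulmx0 mxE.
rewrite submxE; apply/eqP/matrixP => i j; rewrite (ord1 i) [RHS]mxE.
have hc : M *m col j (cokermx M) = 0 by rewrite colE mulmxA mulmx_coker mul0mx.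
rewrite -(hv _ hc) peval_monvec -surjective_pairing !mxE.
by apply: eq_bigr => k _; rewrite !mxE.
Qed.

Lemma moment_matrix_tr m g : (moment_matrix m g)^T = moment_matrix (R:=R) m g.
Proof. by apply/matrixP => a b; rewrite !mxE addnC [((mon b).2 + _)%N]addnC. Qed.

Lemma moment_matrix_eq m g h : moment_matrix (R:=R) m g = moment_matrix m h ->
  forall i j, (i + j <= 2 * m)%N -> g i j = h i j.
Proof.
move=> /matrixP gh i j /mon_split[a [b [-> ->]]].
by have := gh a b; rewrite !mxE.
Qed.

Lemma moment_matrix_sub n (beta gamma : nat -> nat -> R) :
    (forall i j, (i + j <= 2 * n)%N -> gamma i j = beta i j) ->
  mxsub (@widen_deg n) (@widen_deg n) (moment_matrix n.+1 gamma) = moment_matrix n beta.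
Proof.
move=> gb; apply/matrixP => a b; rewrite !mxE !mon_widen_deg; apply: gb.
by have := mon_deg_le a; have := mon_deg_le b; lia.
Qed.

Lemma mulmx_tr_self_eq0 k (u : 'cV[R]_k) : (u^T *m u) 0 0 = 0 -> u = 0.
Proof.
rewrite mxE => /eqP; rewrite psumr_eq0 => [/allP u0 | i _]; last first.
  by rewrite mxE -expr2 sqr_ge0.
apply/matrixP => i j; rewrite (ord1 j) mxE.
by have := u0 i (mem_index_enum i); rewrite mxE -expr2 sqrf_eq0 => /eqP.
Qed.

Lemma psd_quad_eq0 k (M : 'M[R]_k) (x : 'cV_k) :
  psd M -> (x^T *m M *m x) 0 0 = 0 -> M *m x = 0.
Proof.
move=> [Msym Mge0] x0.
have Mtr (u v : 'cV_k) : v^T *m M *m u = (u^T *m M *m v)^T.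
  by rewrite !trmx_mul trmxK Msym mulmxA.
suff orth (y : 'cV_k) : (y^T *m M *m x) 0 0 = 0.
  by apply: mulmx_tr_self_eq0; have := orth (M *m x); rewrite -mulmxA.
set a := (y^T *m M *m y) 0 0; set b := (y^T *m M *m x) 0 0.
have quad t : (x + t *: y)^T *m M *m (x + t *: y) = (t * (2 * b + t * a))%:M.
  have -> : (x + t *: y)^T = x^T + t *: y^T by rewrite linearD linearZ.
  rewrite !mulmxDl !mulmxDr -!scalemxAl -!scalemxAr (Mtr y x).
  rewrite [x^T *m M *m x]mx11_scalar [y^T *m M *m x]mx11_scalar.
  rewrite [y^T *m M *m y]mx11_scalar x0 -/a -/b tr_scalar_mx !scale_scalar_mx.
  by rewrite -!raddfD /=; congr (_%:M); ring.
(* [t = - b / (a + 1)] makes the quadratic form [- b^2 (a + 2) / (a + 1)^2]. *)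
have a_ge0 : 0 <= a by exact: Mge0.
pose u := b / (a + 1).
have bE : b = u * (a + 1) by rewrite /u divfK // gt_eqF //; lra.
clearbody u; have := Mge0 (x + (- u) *: y); rewrite quad mxE /= mulr1n => h.
have u0 : u = 0 by apply/eqP; rewrite -sqrf_eq0 eq_le sqr_ge0 andbT; nra.
by move: bE; rewrite u0 mul0r.
Qed.

Lemma mxsub_flat m m' (f : 'I_m' -> 'I_m) (M : 'M[R]_m) :
  (\rank M <= \rank (mxsub f f M))%N -> (M <= rowsub f M)%MS.
Proof.
move=> hr; have [_ <-] := mxrank_leqif_sup (rowsub_sub f M).
rewrite eqn_leq mxrankS ?rowsub_sub //=; apply: (leq_trans hr).
by rewrite mxsubcr -[X in colsub f X]mulmx1 -mulmx_colsub mxrankM_maxl.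
Qed.

Lemma variety_mxsub n (M : 'M[R]_(mdim n.+1)) :
  psd M -> variety M `<=` variety (mxsub (@widen_deg n) (@widen_deg n) M).
Proof.
move=> Mpsd p pM c Mc0.
set P := rowsub (@widen_deg n) (1%:M : 'M[R]_(mdim n.+1)).
have PtE : P^T = colsub widen_deg 1%:M by rewrite trmx_mxsub trmx1.
have subE : mxsub widen_deg widen_deg M = P *m M *m P^T.
  by rewrite PtE mulmx_colsub mulmx1 -rowsubE mxsubcr.
have PzE : P *m monvec n.+1 p = monvec n p.
  by rewrite -rowsubE; apply/matrixP => a b; rewrite !mxE mon_widen_deg.
have /pM : M *m (P^T *m c) = 0.
  apply: psd_quad_eq0 => //.
  have -> : (P^T *m c)^T *m M *m (P^T *m c) = c^T *m (P *m M *m P^T) *m c.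
    by rewrite trmx_mul trmxK !mulmxA.
  by rewrite -subE -mulmxA Mc0 mulmx0 mxE.
by rewrite !peval_monvec -!surjective_pairing mulmxA -trmx_mul PzE.
Qed.

Definition atom_moments (s : seq (R * R)) (rho : R * R -> R) (i j : nat) : R :=
  \sum_(w <- s) rho w * monom w (i, j).

Lemma moment_matrix_atoms m s rho : moment_matrix m (atom_moments s rho) =
  \sum_(w <- s) rho w *: (monvec m w *m (monvec m w)^T).
Proof.
apply/matrixP => a b; rewrite mxE summxE; apply: eq_bigr => w _.
by rewrite !mxE big_ord1 !mxE (monomD w (mon a) (mon b)) mulrA.
Qed.

Lemma quad_atoms m s rho (x : 'cV_(mdim m)) :
  (x^T *m moment_matrix m (atom_moments s rho) *m x) 0 0 =
  \sum_(w <- s) rho w * ((monvec m w)^T *m x) 0 0 ^+ 2.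
Proof.
rewrite moment_matrix_atoms mulmx_sumr mulmx_suml summxE; apply: eq_bigr => w _.
rewrite -scalemxAr -scalemxAl mxE; congr (_ * _).
rewrite !mulmxA -(mulmxA _ _ x) mxE big_ord1 expr2; congr (_ * _).
have trE (A : 'M[R]_1) : A 0 0 = A^T 0 0 by rewrite mxE.
by rewrite [LHS]trE trmx_mul trmxK.
Qed.

Lemma psd_atoms m s rho : (forall w, w \in s -> 0 <= rho w) ->
  psd (moment_matrix m (atom_moments s rho)).
Proof.
move=> rho_ge0; split => [|x]; first exact: moment_matrix_tr.
rewrite quad_atoms big_seq; apply: sumr_ge0 => w ws.
by rewrite mulr_ge0 ?rho_ge0 ?sqr_ge0.
Qed.

Lemma variety_atoms m s rho w : (forall w, w \in s -> 0 <= rho w) ->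
  w \in s -> 0 < rho w -> variety (moment_matrix m (atom_moments s rho)) w.
Proof.
move=> rho_ge0 ws rho_gt0 c Mc0.
have : (c^T *m moment_matrix m (atom_moments s rho) *m c) 0 0 = 0.
  by rewrite -mulmxA Mc0 mulmx0 mxE.
rewrite quad_atoms big_seq => /eqP; rewrite psumr_eq0 => [/allP/(_ w ws)|v vs].
  by rewrite ws mulf_eq0 gt_eqF //= sqrf_eq0 peval_monvec -surjective_pairing => /eqP.
by rewrite mulr_ge0 ?rho_ge0 ?sqr_ge0.
Qed.

Lemma mxrank_sum_leq m n (I : Type) (t : seq I) (F : I -> 'M[R]_(m, n)) :
  (\rank (\sum_(i <- t) F i)%R <= \sum_(i <- t) \rank (F i))%N.
Proof.
elim/big_ind2: _ => [|A a B b hA hB|i _] //; first by rewrite mxrank0.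
by apply: leq_trans (mxrank_add A B) _; exact: leq_add.
Qed.

Lemma rank_atoms m s rho :
  (\rank (moment_matrix m (atom_moments s rho)) <= size [seq w <- s | rho w != 0%R])%N.
Proof.
rewrite moment_matrix_atoms (bigID (fun w => rho w != 0)) /= addrC big1 => [|w].
  rewrite add0r -big_filter; apply: leq_trans (mxrank_sum_leq _ _) _.
  rewrite -sum1_size leq_sum // => w _.
  apply: leq_trans (mxrankS (scalemx_sub _ (submx_refl _))) _.
  exact: leq_trans (mxrankM_maxr _ _) (rank_leq_row _).
by move/negPn/eqP ->; rewrite scale0r.
Qed.

Lemma atoms_vcard_ge m s rho : uniq s -> (forall w, w \in s -> 0 <= rho w) ->
  vcard_ge (variety (moment_matrix m (atom_moments s rho)))
           (\rank (moment_matrix m (atom_moments s rho))).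
Proof.
move=> s_uniq rho_ge0; set r := \rank _.
exists (take r [seq w <- s | rho w != 0]); split.
- exact/take_uniq/filter_uniq.
- move=> w /= /mem_take; rewrite mem_filter => /andP[rho_neq0 ws].
  by apply: variety_atoms => //; rewrite lt0r rho_neq0 rho_ge0.
- exact/size_takel/rank_atoms.
Qed.

Lemma quad_monvecE m (A : 'M[R]_(mdim m)) p :
  ((monvec m p)^T *m A *m monvec m p) 0 0 =
  \sum_a \sum_b A a b * monom p ((mon a).1 + (mon b).1, (mon a).2 + (mon b).2)%N.
Proof.
rewrite mxE exchange_big /=; apply: eq_bigr => b _; rewrite mxE mulr_suml.
by apply: eq_bigr => a _; rewrite !mxE monomD; ring.
Qed.

(* The columns of [cokermx M] span the kernel of [M], so this is the sum of the
   squares of the values at [p] of a spanning family of the polynomials [q]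
   with [q(X, Y) = 0]. *)
Definition kernel_sos m (M : 'M[R]_(mdim m)) p : R :=
  ((monvec m p)^T *m (cokermx M *m (cokermx M)^T) *m monvec m p) 0 0.

Lemma kernel_sosE m (M : 'M[R]_(mdim m)) p :
  kernel_sos M p = (((cokermx M)^T *m monvec m p)^T *m ((cokermx M)^T *m monvec m p)) 0 0.
Proof. by rewrite /kernel_sos [(_ *m monvec m p)^T]trmx_mul trmxK !mulmxA. Qed.

Lemma kernel_sos_ge0 m (M : 'M[R]_(mdim m)) p : 0 <= kernel_sos M p.
Proof. by rewrite kernel_sosE mxE sumr_ge0 // => i _; rewrite mxE -expr2 sqr_ge0. Qed.

Lemma kernel_sos_eq0 m (M : 'M[R]_(mdim m)) p : kernel_sos M p = 0 <-> variety M p.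
Proof.
rewrite kernel_sosE varietyP submxE -trmx_eq0 [(_ *m cokermx M)^T]trmx_mul trmxK.
by split => [/mulmx_tr_self_eq0 -> | /eqP ->]; rewrite ?eqxx // mulmx0 mxE.
Qed.

Lemma kernel_sos_moments m (M : 'M[R]_(mdim m)) : M^T = M ->
  \sum_a \sum_b (cokermx M *m (cokermx M)^T) a b * M a b = 0.
Proof.
move=> Msym; transitivity (\tr (cokermx M *m (cokermx M)^T *m M)).
  rewrite /mxtrace; apply: eq_bigr => a _; rewrite mxE; apply: eq_bigr => b _.
  by congr (_ * _); rewrite -{1}Msym mxE.
have CtM : (cokermx M)^T *m M = 0.
  by rewrite -[X in _ *m X]Msym -trmx_mul mulmx_coker trmx0.
by rewrite -mulmxA CtM mulmx0 mxtrace0.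
Qed.

Section FlatExtension.
Variables (n : nat) (gamma : nat -> nat -> R) (s : seq (R * R)).
Let M := moment_matrix n.+1 gamma.
Let W := rowsub (@widen_deg n) M.
Hypotheses (M_psd : psd M) (s_uniq : uniq s) (s_variety : forall w, w \in s -> variety M w).
Hypotheses (size_s : size s = \rank M) (M_flat : (M <= W)%MS).

Let w_ (k : 'I_(size s)) := nth 0 s k.
Let Z : 'M[R]_(size s, mdim n.+1) := \matrix_(k, b) monom (w_ k) (mon b).
Let C := Z *m pinvmx W.
(* Row [k] of [A] is the coefficient vector of a polynomial [p_k] of degree at
   most [n] with [z(w_k) = M p_k]; [G k l] is then [p_l(w_k)]. *)
Let A := C *m rowsub (@widen_deg n) 1%:M.
Let G := Z *m A^T.

Fact Z_sub_W : (Z <= W)%MS.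
Proof.
apply/row_subP => k; apply: submx_trans M_flat.
have /varietyP := s_variety (mem_nth 0 (ltn_ord k)).
by congr (_ <= _)%MS; apply/matrixP => i j; rewrite !mxE.
Qed.

Fact ZE : Z = A *m M.
Proof. by rewrite /A -mulmxA -rowsubE mulmxKpV //; exact: Z_sub_W. Qed.

Fact Z_entry k b : Z k b =
  \sum_a C k a * gamma ((mon a).1 + (mon b).1)%N ((mon a).2 + (mon b).2)%N.
Proof.
rewrite -{1}(mulmxKpV Z_sub_W) mxE; apply: eq_bigr => a _.
by rewrite !mxE mon_widen_deg.
Qed.

Fact G_entry k l : G k l = \sum_a C l a * monom (w_ k) (mon a).
Proof.
rewrite /G /A trmx_mul trmx_mxsub trmx1 mulmxA mulmx_colsub mulmx1 mxE.
by apply: eq_bigr => a _; rewrite !mxE mon_widen_deg mulrC.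
Qed.

Fact G_tr : G^T = G.
Proof.
have trAMA (B : 'M[R]_(size s, mdim n.+1)) : (B *m M *m B^T)^T = B *m M *m B^T.
  by rewrite !trmx_mul trmxK moment_matrix_tr mulmxA.
by rewrite /G ZE trAMA.
Qed.

Fact G_shift e k l : (e.1 + e.2 <= 1)%N ->
  monom (w_ k) e * G k l = monom (w_ l) e * G l k.
Proof.
move=> e_le1.
suff GE : forall k' l', monom (w_ k') e * G k' l' = \sum_c \sum_a C k' a * C l' c *
    gamma ((mon a).1 + (mon c).1 + e.1)%N ((mon a).2 + (mon c).2 + e.2)%N.
  rewrite !GE exchange_big /=; apply: eq_bigr => c _; apply: eq_bigr => a _.
  by rewrite (mulrC (C k c)) (addnC (mon a).1) (addnC (mon a).2).
move=> k' l'; rewrite G_entry mulr_sumr; apply: eq_bigr => c _.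
have [b bE] : exists b : 'I_(mdim n.+1), mon b = ((mon c).1 + e.1, (mon c).2 + e.2)%N.
  by apply: mon_onto; have := mon_deg_le c; lia.
have := Z_entry k' b; rewrite mxE bE monomD => Zb.
rewrite mulrCA (mulrC (monom _ e)) Zb mulr_sumr; apply: eq_bigr => a _.
by rewrite !addnA; ring.
Qed.

Fact G_offdiag k l : k != l -> G k l = 0.
Proof.
move=> kl.
have Gs : G k l = G l k by rewrite -{1}G_tr mxE.
have sep e : (e.1 + e.2 <= 1)%N -> monom (w_ k) e != monom (w_ l) e -> G k l = 0.
  move=> e_le1 /negPf wkl; have /eqP := G_shift k l e_le1.
  by rewrite -Gs -subr_eq0 -mulrBl mulf_eq0 subr_eq0 wkl => /eqP.
have : w_ k != w_ l by rewrite nth_uniq.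
case: (w_ k) (w_ l) sep => [xk yk] [xl yl] sep.
have [-> | xkl _] := eqVneq xk xl.
  by rewrite xpair_eqE eqxx => ykl; apply: (sep (0, 1)%N); rewrite // /monom /= !mul1r.
by apply: (sep (1, 0)%N); rewrite // /monom /= !mulr1.
Qed.

Fact G_diag_gt0 k : 0 < G k k.
Proof.
have GkkE : ((row k A)^T^T *m M *m (row k A)^T) 0 0 = G k k.
  by rewrite trmxK -row_mul -ZE !mxE; apply: eq_bigr => j _; rewrite !mxE.
rewrite lt0r -GkkE (proj2 M_psd) andbT; apply/eqP => /(psd_quad_eq0 M_psd) M_Ak0.
have [a0 a0E] := @mon_onto n.+1 0 0 isT.
have /matrixP/(_ 0 a0) := congr1 trmx M_Ak0.
rewrite trmx_mul trmxK (proj1 M_psd) -row_mul -ZE !mxE a0E.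
by rewrite /monom !expr0 mulr1 => /eqP; rewrite oner_eq0.
Qed.

Let D := diag_mx (\row_k (G k k)^-1).

Fact DG : D *m G = 1%:M.
Proof.
apply/matrixP => k l; rewrite mul_diag_mx mxE [X in X * _]mxE [RHS]mxE.
have [<- | kl] := eqVneq k l; first by rewrite mulVf ?gt_eqF ?G_diag_gt0.
by rewrite (G_offdiag kl) mulr0.
Qed.

Fact M_sub_Z : (M <= Z)%MS.
Proof.
have Z_sub_M : (Z <= M)%MS by rewrite ZE submxMl.
have [_ <-] := mxrank_leqif_sup Z_sub_M.
rewrite eqn_leq mxrankS //= -size_s.
have [_ /mxrank_unit rankG] := mulmx1_unit DG.
by have := mxrankM_maxl Z A^T; rewrite -/G rankG.
Qed.

Fact M_decomp : M = Z^T *m D *m Z.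
Proof.
have [B MB] := submxP M_sub_Z.
have MZ : M = Z^T *m B^T by rewrite -trmx_mul -MB moment_matrix_tr.
have ZG : Z = G *m B^T.
  by rewrite {1}ZE {1}MZ mulmxA -G_tr /G trmx_mul trmxK.
have BD : B^T = D *m Z by rewrite ZG mulmxA DG mul1mx.
by rewrite {1}MZ BD mulmxA.
Qed.

Lemma flat_atoms : exists2 rho : R * R -> R,
  forall w, 0 <= rho w & M = moment_matrix n.+1 (atom_moments s rho).
Proof.
pose rho w := if insub (index w s) is Some k then (G k k)^-1 else 0.
exists rho => [w|].
  by rewrite /rho; case: insubP => // k _ _; rewrite invr_ge0 ltW ?G_diag_gt0.
apply/matrixP => a b; rewrite M_decomp -mulmxA [LHS]mxE [RHS]mxE.
rewrite /atom_moments (big_nth 0) big_mkord; apply: eq_bigr => k _.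
rewrite mul_diag_mx [X in _ * X]mxE [X in _ * (X * _)]mxE /rho index_uniq // valK.
by move: (G k k)^-1 => g; rewrite !mxE monomD /w_; ring.
Qed.

End FlatExtension.
End Moments.

Section AtomicMeasures.
Variable R : realType.
Local Open Scope ereal_scope.

Lemma measurable_monom e : measurable_fun setT (@monom R ^~ e).
Proof. by apply: measurable_funM; apply: measurable_funX. Qed.

Lemma measurable_point (w : R * R) : measurable [set w].
Proof.
have -> : [set w] = [set w.1] `*` [set w.2].
  by apply/seteqP; split => [x /= -> | [x1 x2] /= [-> ->]] //; case: w.
by apply: measurableX; exact: measurable_set1.
Qed.

Lemma measurable_fset (s : seq (R * R)) : measurable [set` s].
Proof.
elim: s => [|w s ih]; first by rewrite (_ : [set` _] = set0) //; apply/seteqP; split.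
rewrite (_ : [set` _] = [set w] `|` [set` s]).
  exact: measurableU (measurable_point w) ih.
apply/seteqP; split => x /=; first by rewrite inE => /orP[/eqP|]; [left | right].
by case=> [->|xs]; rewrite inE ?eqxx ?xs ?orbT.
Qed.

Section FiniteSupport.
Variables (mu : {measure set (R * R) -> \bar R}) (s : seq (R * R)).
Hypotheses (s_uniq : uniq s) (mu_supp : mu (~` [set` s]) = 0).
Hypothesis mu_fin : forall w, w \in s -> mu [set w] \is a fin_num.

Lemma integral_fsupp (g : R * R -> R) : measurable_fun setT g ->
  \int[mu]_x (g x)%:E = (\sum_(w <- s) g w * fine (mu [set w]))%:E.
Proof.
move=> mg.
have mu_fin' w : mu [set w] \is a fin_num.
  have [/mu_fin //|ws] := boolP (w \in s).
  suff -> : mu [set w] = 0 by [].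
  apply/eqP; rewrite eq_le measure_ge0 andbT -mu_supp le_measure ?inE //.
  - exact: measurable_point.
  - exact: measurableC (measurable_fset s).
  - by move=> x /= ->; exact/negP.
have indic_int w : mu.-integrable setT (fun x => (\1_[set w] x)%:E).
  apply/integrableP; split.
    by apply/measurable_EFinP; exact: measurable_indic (measurable_point w).
  under eq_integral do rewrite gee0_abs ?lee_fin //.
  by rewrite integral_indic ?setIT -?ge0_fin_numE ?measure_ge0 //; exact: measurable_point.
pose h x := (\sum_(w <- s) g w * \1_[set w] x)%R.
have -> : \int[mu]_x (g x)%:E = \int[mu]_x (h x)%:E.
  apply: ae_eq_integral => //.
  - exact/measurable_EFinP.
  - apply/measurable_EFinP; apply: measurable_sum => w; apply: measurable_funM => //.
    exact: measurable_indic (measurable_point w).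
  exists (~` [set` s]); split => //; first exact: measurableC (measurable_fset s).
  move=> x /= /not_implyP[_ hx] xs; apply: hx; congr EFin.
  rewrite /h (bigD1_seq x) //= indicE mem_set // mulr1 big1_seq ?addr0 // => w /andP[wx _].
  by rewrite indicE memNset ?mulr0 //= => xw; move: wx; rewrite xw eqxx.
under eq_integral do rewrite /h -sumEFin.
rewrite integral_sum //; last first.
  move=> w; under eq_fun do rewrite EFinM; exact: integrableZl.
rewrite -sumEFin; apply: eq_bigr => w _; under eq_integral do rewrite EFinM.
rewrite integralZl // integral_indic ?setIT ?EFinM ?fineK //; exact: measurable_point.
Qed.

Lemma integrable_fsupp (g : R * R -> R) : measurable_fun setT g ->
  mu.-integrable setT (fun x => (g x)%:E).
Proof.
move=> mg; apply/integrableP; split; first exact/measurable_EFinP.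
under eq_integral do rewrite abse_EFin.
by rewrite integral_fsupp ?ltry //; exact: measurableT_comp.
Qed.

End FiniteSupport.

Definition atom_measure (s : seq (R * R)) (rho : R * R -> R)
    (rho_ge0 : forall w, (0 <= rho w)%R) :=
  msum (fun k => mscale (NngNum (rho_ge0 (nth 0%R s k))) \d_(nth 0%R s k)) (size s).

Lemma atom_measureE s rho (rho_ge0 : forall w, (0 <= rho w)%R) A :
  atom_measure s rho_ge0 A = (\sum_(w <- s) rho w * (w \in A)%:R)%:E.
Proof.
rewrite /atom_measure /msum (big_nth 0%R) big_mkord -sumEFin; apply: eq_bigr => k _.
change ((rho (nth 0%R s k))%:E * (\1_A (nth 0%R s k))%:E =
  (rho (nth 0%R s k) * (nth 0%R s k \in A)%:R)%:E).
by rewrite indicE -EFinM.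
Qed.

Lemma atom_measure_moments s rho (rho_ge0 : forall w, (0 <= rho w)%R) i j : uniq s ->
  (atom_measure s rho_ge0).-integrable setT (fun p => (monom p (i, j))%:E) /\
  \int[atom_measure s rho_ge0]_p (monom p (i, j))%:E = (atom_moments s rho i j)%:E.
Proof.
move=> s_uniq; set mu := atom_measure s rho_ge0.
have mu_supp : mu (~` [set` s]) = 0.
  rewrite /mu atom_measureE big_seq big1 // => w ws.
  by rewrite memNset ?mulr0 //= => /(_ ws).
have mu1 w : w \in s -> mu [set w] = (rho w)%:E.
  move=> ws; rewrite /mu atom_measureE (bigD1_seq w) //= mem_set // mulr1 big1_seq ?addr0 //.
  by move=> v /andP[vw _]; rewrite memNset ?mulr0 //= => /eqP; rewrite (negPf vw).
have mu_fin w : w \in s -> mu [set w] \is a fin_num by move/mu1 ->.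
split; first exact (integrable_fsupp s_uniq mu_supp mu_fin (measurable_monom (i, j))).
rewrite (integral_fsupp s_uniq mu_supp mu_fin (measurable_monom _)); congr EFin.
rewrite /atom_moments big_seq [RHS]big_seq; apply: eq_bigr => w ws.
by rewrite mulrC; congr (_ * _)%R; exact (congr1 fine (mu1 w ws)).
Qed.

End AtomicMeasures.

Section RepresentingMeasure.
Variables (R : realType) (n : nat) (beta : nat -> nat -> R).
Variable mu : {measure set (R * R) -> \bar R}.
Hypothesis mu_rep : rep_measure n beta mu.
Local Open Scope ereal_scope.

Let mon_sum_deg (a b : 'I_(mdim n)) :
  ((mon a).1 + (mon b).1 + ((mon a).2 + (mon b).2) <= 2 * n)%N.
Proof. by have := mon_deg_le a; have := mon_deg_le b; lia. Qed.

Lemma integral_quad_monvec (A : 'M[R]_(mdim n)) :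
  \int[mu]_p (((monvec n p)^T *m A *m monvec n p) 0 0)%:E =
  (\sum_a \sum_b A a b * moment_matrix n beta a b)%:E.
Proof.
have term_int a b : mu.-integrable setT (fun p =>
    (A a b * monom p ((mon a).1 + (mon b).1, (mon a).2 + (mon b).2)%N)%:E).
  have [mon_int _] := mu_rep (mon_sum_deg a b).
  under eq_fun do rewrite EFinM; exact: integrableZl.
under eq_integral do rewrite quad_monvecE -sumEFin.
under eq_integral do under eq_bigr do rewrite -sumEFin.
rewrite integral_sum // => [|a]; last exact: integrable_sum.
rewrite -sumEFin; apply: eq_bigr => a _.
rewrite integral_sum // -sumEFin; apply: eq_bigr => b _.
have [mon_int mon_mom] := mu_rep (mon_sum_deg a b).
under eq_integral do rewrite EFinM.
by rewrite integralZl // mon_mom -EFinM mxE.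
Qed.

Lemma variety_null : mu (~` variety (moment_matrix n beta)) = 0.
Proof.
set M0 := moment_matrix n beta; pose f := kernel_sos M0.
have mf : measurable_fun setT f.
  rewrite /f /kernel_sos; under eq_fun do rewrite quad_monvecE.
  apply: measurable_sum => a; apply: measurable_sum => b.
  exact: measurable_funM (measurable_monom _).
have int_f0 : \int[mu]_p `|(f p)%:E| = 0.
  under eq_integral do rewrite abse_EFin ger0_norm ?kernel_sos_ge0 //.
  by rewrite integral_quad_monvec kernel_sos_moments // moment_matrix_tr.
have mEf : measurable_fun setT (EFin \o f) by exact/measurable_EFinP.
have [N [mN N0 fN]] := (ae_eq_integral_abs mu measurableT mEf).1 int_f0.
apply/eqP; rewrite eq_le measure_ge0 andbT -N0 le_measure ?inE //.
- rewrite (_ : ~` _ = setT `&` f @^-1` (~` [set 0%R])).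
    exact: mf measurableT _ (measurableC (measurable_set1 _)).
  apply/seteqP; split => p /= => [Vp | [_ fp0] Vp]; first split => // fp0.
    exact: Vp ((kernel_sos_eq0 M0 p).1 fp0).
  exact: fp0 ((kernel_sos_eq0 M0 p).2 Vp).
- move=> p /= Vp; apply: fN => /(_ I) [fp0].
  exact: Vp ((kernel_sos_eq0 M0 p).1 fp0).
Qed.

Lemma rep_measure_atoms t : uniq t -> [set` t] = variety (moment_matrix n beta) ->
  exists2 rho : R * R -> R, forall w, (0 <= rho w)%R &
    forall i j, (i + j <= 2 * n)%N -> beta i j = atom_moments t rho i j.
Proof.
move=> t_uniq tV.
have mu_supp : mu (~` [set` t]) = 0 by rewrite tV variety_null.
have mu_fin w : mu [set w] \is a fin_num.
  rewrite ge0_fin_numE ?measure_ge0 //; apply: (le_lt_trans (y := mu setT)).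
    by rewrite le_measure ?inE //; exact: measurable_point.
  rewrite (_ : mu setT = (beta 0 0)%:E) ?ltry //.
  have [_ <-] := mu_rep (isT : (0 + 0 <= 2 * n)%N).
  rewrite (eq_integral (cst 1)) => [|p _]; last by rewrite !expr0 mulr1.
  by rewrite integral_cst // mul1e.
exists (fun w => fine (mu [set w])) => [w|i j ij]; first exact/fine_ge0/measure_ge0.
have := integral_fsupp t_uniq mu_supp (fun w _ => mu_fin w) (measurable_monom (i, j)).
have [_ ->] := mu_rep ij.
by case=> ->; apply: eq_bigr => w _; rewrite mulrC.
Qed.

End RepresentingMeasure.

Theorem corollary3p2 (R : realType) (n : nat) (beta : nat -> nat -> R) :
  (1 <= n)%N ->
  vcard_eq (variety (moment_matrix n beta)) (\rank (moment_matrix n beta)) ->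
  ((exists mu : {measure set (R * R) -> \bar R}, rep_measure n beta mu) <->
   (exists gamma : nat -> nat -> R,
      [/\ forall i j : nat, (i + j <= 2 * n)%N -> gamma i j = beta i j,
          psd (moment_matrix n.+1 gamma)
        & vcard_ge (variety (moment_matrix n.+1 gamma))
                  (\rank (moment_matrix n.+1 gamma))])).
Proof.
move=> _ [t [t_uniq tV size_t]]; split.
  case=> mu /rep_measure_atoms /(_ t t_uniq tV) [rho rho_ge0 betaE].
  exists (atom_moments t rho); split => [i j /betaE // | |].
  - by apply: psd_atoms => w _; exact: rho_ge0.
  - by apply: atoms_vcard_ge => // w _; exact: rho_ge0.
case=> gamma [gammaE M_psd [s [s_uniq sV size_s]]].
set M := moment_matrix n.+1 gamma.
have sVn w : w \in s -> [set` t] w.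
  by move=> /sV /(variety_mxsub M_psd); rewrite (moment_matrix_sub gammaE) tV.
have M_flat : (M <= rowsub (@widen_deg n) M)%MS.
  apply: mxsub_flat; rewrite (moment_matrix_sub gammaE) -size_s -size_t.
  exact: uniq_leq_size s_uniq sVn.
have [rho rho_ge0 ME] := flat_atoms M_psd s_uniq sV size_s M_flat.
exists (atom_measure s rho_ge0) => i j ij.
rewrite -gammaE // (moment_matrix_eq ME); last by lia.
exact: atom_measure_moments.
Qed.
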